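(* Let $n$ be a prime, let $\alpha$ be a primitive element of $\mathbb{F}_{2^n}$, identify $\mathbb{F}_2^n$ with $\mathbb{F}_{2^n}$ as $\mathbb{F}_2$-vector spaces, and let $k\ge 2$. If there exist $\frac{2^n-2}{(2^k-1)(2^k-2)n}$ pairwise disjoint coset complete $k$-dimensional subspaces of $\mathbb{F}_2^n$, then there exists a Steiner structure $\mathbb{S}_2[2,k,n]$.
   Context: For $s\in\mathbb{Z}_{2^n-1}$, the cyclotomic coset of $s$ is $C_s=\{s\cdot 2^i \bmod (2^n-1): 0\le i\le n-1\}$, and $\rho(s)$ denotes the smallest element of $C_s$ (its coset representative). For a $k$-dimensional subspace $X=\{0,\alpha^{i_1},\dots,\alpha^{i_{2^k-1}}\}$ of $\mathbb{F}_2^n$ (exponents in $\mathbb{Z}_{2^n-1}$), its coset difference set is $\rho(\Delta(X))=\{\rho(i_r-i_s): 1\le r,s\le 2^k-1,\ r\ne s\}$. $X$ is coset complete if $|\rho(\Delta(X))|=(2^k-1)(2^k-2)$; two coset complete subspaces $X,Y$ are disjoint coset complete if $\rho(\Delta(X))\cap\rho(\Delta(Y))=\varnothing$. A Steiner structure $\mathbb{S}_2[2,k,n]$ is a set of $k$-dimensional subspaces of $\mathbb{F}_2^n$ such that each $2$-dimensional subspace of $\mathbb{F}_2^n$ is contained in exactly one of them. *)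

From HB Require Import structures.
From mathcomp Require Import all_boot all_order all_algebra.
Set Implicit Arguments. Unset Strict Implicit. Unset Printing Implicit Defensive.
Import GRing.Theory.
Local Open Scope ring_scope.

(* Cyclotomic coset representative rho(s) in Z_N (N = 2^n - 1):
   smallest element of { s * 2^i mod N : 0 <= i <= n-1 }. *)
Definition rho (N n s : nat) : nat :=
  \big[minn/ (s %% N)%N]_(i < n) ((s * 2 ^ i) %% N)%N.

(* Discrete logarithm to base a of x, as an element of {0, ..., N-1}
   (for a primitive N-th root a and x <> 0, the unique i < N with a^i = x). *)
Definition dlog (L : fieldType) (N : nat) (a x : L) : nat :=
  find (fun i => a ^+ i == x) (iota 0 N).

Section CosetDiff.
Variables (n : nat) (L : finFieldType) (phi : 'rV['F_2]_n -> L) (alpha : L).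

Definition NN : nat := (2 ^ n).-1.

Definition nzpts (X : {vspace 'rV['F_2]_n}) : seq L :=
  [seq phi v | v <- enum [set: 'rV['F_2]_n] & (v \in X) && (v != 0)].

Definition coset_diff (X : {vspace 'rV['F_2]_n}) : seq nat :=
  undup [seq rho NN n ((dlog NN alpha p.1 + NN - dlog NN alpha p.2) %% NN)%N
        | p <- [seq (x, y) | x <- nzpts X, y <- nzpts X] & p.1 != p.2].

Definition coset_complete (k : nat) (X : {vspace 'rV['F_2]_n}) : bool :=
  (\dim X == k) && (size (coset_diff X) == ((2 ^ k).-1 * (2 ^ k - 2))%N).

Definition disjoint_coset (X Y : {vspace 'rV['F_2]_n}) : bool :=
  ~~ has (fun d => d \in coset_diff Y) (coset_diff X).

End CosetDiff.

Definition steiner_structure (k n : nat) (S : seq {vspace 'rV['F_2]_n}) : Prop :=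
  uniq S /\ (forall V, V \in S -> \dim V = k) /\
  (forall U : {vspace 'rV['F_2]_n}, \dim U = 2%N ->
     count (fun V => (U <= V)%VS) S = 1%N).
Arguments steiner_structure : clear implicits.

From HB Require Import structures.
From mathcomp Require Import all_boot all_order all_algebra finfield zify.
Import Order.TTheory GRing.Theory.
Local Open Scope ring_scope.
Set Implicit Arguments. Unset Strict Implicit. Unset Printing Implicit Defensive.

(* The Steiner structure consists of the images of the given subspaces under the maps
   x |-> alpha^j x^(2^l), j < 2^n - 1, l < n. These maps are F_2-linear injections and
   preserve the cyclotomic coset of log_alpha (x / y). So if an ordered pair (x, y) of
   distinct nonzero vectors lies in two such blocks, this coset identifies the original
   subspace (the coset difference sets are disjoint), then the pair it came from (coset
   completeness), and finally j and l: as n is prime, x |-> x^(2^e) with 0 < e < n fixes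
   only F_2. Thus the blocks carry pairwise disjoint sets of ordered pairs, and the
   hypothesis on their number makes these sets exhaust all pairs; hence every
   2-dimensional subspace {0, x, y, x + y} lies in exactly one block. *)

Section CyclotomicCosets.
Variable n : nat.
Hypothesis n_gt0 : (0 < n)%N.
Local Notation N := (NN n).

Lemma exp2_modNN i : (2 ^ i = 2 ^ (i %% n) %[mod N])%N.
Proof.
have exp2n : (2 ^ n = 1 %[mod N])%N.
  have -> : (2 ^ n = N + 1)%N by rewrite addn1 prednK // expn_gt0.
  by rewrite -modnDml modnn.
rewrite {1}(divn_eq i n) expnD [(_ %/ n * n)%N]mulnC expnM -modnMml -modnXm exp2n.
by rewrite modnXm exp1n modnMml mul1n.
Qed.

Lemma rho_le s i : (rho N n s <= s * 2 ^ i %% N)%N.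
Proof.
rewrite -modnMmr exp2_modNN modnMmr -leEnat.
exact: (bigmin_le _ (Ordinal (ltn_pmod i n_gt0)) (fun i : 'I_n => s * 2 ^ i %% N)%N).
Qed.

Lemma rho_attained s : exists i, rho N n s = (s * 2 ^ i %% N)%N.
Proof.
apply: (big_ind (fun r => exists i, r = s * 2 ^ i %% N)%N).
- by exists 0%N; rewrite expn0 muln1.
- by move=> _ _ [i ->] [j ->]; rewrite /minn; case: ifP; [exists i | exists j].
- by move=> i _; exists i.
Qed.

Lemma rho_mulX_le s s' l : (s' = s * 2 ^ l %[mod N])%N -> (rho N n s <= rho N n s')%N.
Proof.
move=> s's; have [i ->] := rho_attained s'.
by rewrite -modnMml s's modnMml -mulnA -expnD rho_le.
Qed.

(* Multiplication by [2 ^ (l * (n - 1))] inverts multiplication by [2 ^ l] modulo [N]. *)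
Lemma rho_mulX s s' l : (s' = s * 2 ^ l %[mod N])%N -> rho N n s' = rho N n s.
Proof.
move=> s's; apply/eqP; rewrite eqn_leq (rho_mulX_le s's) andbT.
apply: (@rho_mulX_le _ _ (l * n.-1)); rewrite -modnMml s's modnMml -mulnA -expnD.
have -> : (l + l * n.-1 = n * l)%N by case: n n_gt0 {s's} => // n' _ /=; lia.
rewrite expnM -modnMmr -modnXm.
have -> : (2 ^ n %% N = 1 %% N)%N by rewrite exp2_modNN modnn.
by rewrite modnXm exp1n modnMmr muln1.
Qed.

End CyclotomicCosets.

Section FiniteField.
Variables (n : nat) (L : finFieldType) (alpha : L).
Hypothesis cardL : #|L| = (2 ^ n)%N.
Hypothesis alpha_prim : (NN n).-primitive_root alpha.
Local Notation N := (NN n).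

Lemma pchar2L : 2 \in [pchar L].
Proof. exact: card_finPcharP cardL _. Qed.

Lemma NN_gt0 : (0 < N)%N.
Proof. exact: prim_order_gt0 alpha_prim. Qed.

Lemma card_L_NN : #|L| = N.+1.
Proof. by rewrite cardL prednK // expn_gt0. Qed.

Lemma alpha_neq0 : alpha != 0.
Proof.
apply/eqP=> a0; have := prim_expr_order alpha_prim.
by rewrite a0 expr0n gtn_eqF ?NN_gt0 //= => /eqP; rewrite eq_sym oner_eq0.
Qed.

Lemma expf_NN (z : L) : z != 0 -> z ^+ N = 1.
Proof.
by move=> z0; apply: (mulIf z0); rewrite mul1r -exprSr -card_L_NN expf_card.
Qed.

Lemma dlogP (z : L) : z != 0 -> (dlog N alpha z < N)%N /\ alpha ^+ dlog N alpha z = z.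
Proof.
move=> z0; have [i ->] := prim_rootP alpha_prim (expf_NN z0).
have hasi : has (fun k => alpha ^+ k == alpha ^+ i) (iota 0 N).
  by apply/hasP; exists (val i); rewrite ?mem_iota ?ltn_ord.
have lt_dlog : (dlog N alpha (alpha ^+ i) < N)%N.
  by rewrite -[X in (_ < X)%N](size_iota 0) -has_find.
split=> //; apply/eqP; have := nth_find 0%N hasi.
by rewrite nth_iota ?add0n.
Qed.

Definition log_quot (x y : L) : nat := ((dlog N alpha x + N - dlog N alpha y) %% N)%N.

Lemma expr_log_quot (x y : L) : x != 0 -> y != 0 -> alpha ^+ log_quot x y = x / y.
Proof.
move=> x0 y0; have [xN ex] := dlogP x0; have [/ltnW yN ey] := dlogP y0.
rewrite /log_quot expr_mod ?(prim_expr_order alpha_prim) // -addnBA // exprD ex.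
congr (_ * _); apply: (mulIf y0); rewrite mulVf // -{2}ey -exprD subnK //.
exact: prim_expr_order alpha_prim.
Qed.

Lemma expr_pow2D l (x y : L) : (x + y) ^+ (2 ^ l) = x ^+ (2 ^ l) + y ^+ (2 ^ l).
Proof.
elim: l => [|l IHl]; first by rewrite !expr1.
by rewrite expnSr !exprM IHl -!(pFrobenius_autE pchar2L) rmorphD.
Qed.

Lemma expr_pow2_inj l : injective (fun x : L => x ^+ (2 ^ l)).
Proof.
move=> x y /= exy; apply/eqP; rewrite -subr_eq0.
have : (x - y) ^+ (2 ^ l) == 0.
  by rewrite (oppr_pchar2 pchar2L) expr_pow2D exy (addrr_pchar2 pchar2L).
by rewrite expf_eq0 expn_gt0.
Qed.

Lemma expr_pow2_fixed_iter (w : L) e c : w ^+ (2 ^ e) = w -> w ^+ (2 ^ (e * c)) = w.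
Proof.
by move=> we; elim: c => [|c IHc]; rewrite ?muln0 ?expr1 // mulnS expnD exprM we.
Qed.

(* By Bezout, [e * c = 1 + a * n]; since [v ^+ 2 ^ n = v], this turns into [w ^+ 2 = w]. *)
Lemma expr_pow2_fixed (w : L) e : prime n -> (0 < e < n)%N -> w != 0 ->
  w ^+ (2 ^ e) = w -> w = 1.
Proof.
move=> pn /andP[e_gt0 e_lt_n] w0 we.
have wn (v : L) : v ^+ (2 ^ n) = v by rewrite -cardL expf_card.
have [a _] := Bezoutl n e_gt0.
have -> : gcdn e n = 1%N.
  apply/eqP; rewrite -/(coprime e n) coprime_sym prime_coprime //.
  by apply/negP=> /(dvdn_leq e_gt0); rewrite leqNgt e_lt_n.
case/dvdnP=> c ec; have := expr_pow2_fixed_iter c we.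
rewrite mulnC -ec expnD expn1 exprM [(a * n)%N]mulnC expr_pow2_fixed_iter ?wn // => ww.
by apply: (mulfI w0); rewrite mulr1 -expr2.
Qed.

Lemma expr_pow2_eq1 (w : L) l1 l2 : prime n -> (l1 < l2 < n)%N -> w != 0 ->
  w ^+ (2 ^ l1) = w ^+ (2 ^ l2) -> w = 1.
Proof.
move=> pn /andP[l12 l2n] w0 e12; apply: (@expr_pow2_inj l1); rewrite /= expr1n.
apply: (@expr_pow2_fixed _ (l2 - l1)) => //; first by rewrite subn_gt0 l12; lia.
  by rewrite expf_neq0.
by rewrite -exprM -expnD subnKC 1?ltnW // e12.
Qed.

Definition twist (j l : nat) (x : L) : L := alpha ^+ j * x ^+ (2 ^ l).

Lemma twistD j l : {morph twist j l : x y / x + y}.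
Proof. by move=> x y; rewrite /twist expr_pow2D mulrDr. Qed.

Lemma twist_inj j l : injective (twist j l).
Proof. by move=> x y /(mulfI (expf_neq0 j alpha_neq0)) /expr_pow2_inj. Qed.

Lemma twist_eq0 j l (x : L) : (twist j l x == 0) = (x == 0).
Proof. by rewrite mulf_eq0 expf_eq0 (negbTE alpha_neq0) andbF expf_eq0 expn_gt0. Qed.

Lemma twist_div j l (x y : L) : y != 0 ->
  twist j l x / twist j l y = (x / y) ^+ (2 ^ l).
Proof.
move=> y0; rewrite /twist invfM mulrACA divff ?expf_neq0 ?alpha_neq0 // mul1r.
by rewrite exprMn exprVn.
Qed.

Lemma log_quot_twist j l (x y : L) : x != 0 -> y != 0 ->
  (log_quot (twist j l x) (twist j l y) = log_quot x y * 2 ^ l %[mod N])%N.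
Proof.
move=> x0 y0; apply/eqP; rewrite -(eq_prim_root_expr alpha_prim) exprM.
by rewrite !expr_log_quot ?twist_div ?twist_eq0.
Qed.

Lemma twist_params_uniq (a b : L) j j' l l' : prime n ->
  a != 0 -> b != 0 -> a != b -> (j < N)%N -> (j' < N)%N -> (l < n)%N -> (l' < n)%N ->
  twist j l a = twist j' l' a -> twist j l b = twist j' l' b -> j = j' /\ l = l'.
Proof.
move=> pn a0 b0 ab jN j'N ln l'n ea eb.
have ab0 : a / b != 0 by rewrite mulf_neq0 ?invr_eq0.
have ab1 : a / b != 1 by rewrite (can2_eq (divfK b0) (mulfK b0)) mul1r.
have eab : (a / b) ^+ (2 ^ l) = (a / b) ^+ (2 ^ l').
  by rewrite -(twist_div j) // -(twist_div j') // ea eb.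
have ll' : l = l'.
  case: (ltngtP l l') => // [ll' | l'l]; case/eqP: ab1.
    by apply: (expr_pow2_eq1 pn _ ab0 eab); rewrite ll'.
  by apply: (expr_pow2_eq1 pn _ ab0 (esym eab)); rewrite l'l.
split=> //; subst l'; move: ea; rewrite /twist => /(mulIf (expf_neq0 _ a0)) /eqP.
by rewrite (eq_prim_root_expr alpha_prim) !modn_small // => /eqP.
Qed.

End FiniteField.

Section Pairs.
Variable T : finType.

Definition offdiag (A : {set T}) : {set T * T} :=
  [set p | [&& p.1 \in A, p.2 \in A & p.1 != p.2]].

Lemma card_offdiag (A : {set T}) : #|offdiag A| = (#|A| * #|A|.-1)%N.
Proof.
have -> : offdiag A = setX A A :\: [set (x, x) | x in A].
  apply/setP=> [[x y]]; rewrite !inE /=.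
  apply/and3P/andP=> [[xA yA xy] | [xxA /andP[xA yA]]].
    by split; rewrite ?xA ?yA //; apply: contra xy => /imsetP[z _ [-> ->]].
  by split=> //; apply: contra xxA => /eqP <-; apply/imsetP; exists x.
rewrite cardsD cardsX (setIidPr _); last first.
  by apply/subsetP=> _ /imsetP[x xA ->]; rewrite inE xA.
rewrite card_imset; last by move=> x y [].
by rewrite -subn1 mulnBr muln1.
Qed.

Definition offpairs (s : seq T) : seq (T * T) :=
  [seq p <- [seq (x, y) | x <- s, y <- s] | p.1 != p.2].

Lemma mem_offpairs (s : seq T) : offpairs s =i offdiag [set x in s].
Proof.
move=> [x y]; rewrite mem_filter !inE /=; apply/andP/and3P=> [[xy] | [xs ys xy]].
  by case/allpairsP=> [[x' y'] [/= xs ys [ex ey]]]; rewrite ex ey in xy *.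
by split=> //; apply/allpairsP; exists (x, y).
Qed.

Lemma size_offpairs (s : seq T) : uniq s -> size (offpairs s) = (size s * (size s).-1)%N.
Proof.
move=> s_uniq; have op_uniq : uniq (offpairs s).
  by apply/filter_uniq/allpairs_uniq => // [[a b] [c d]] _ _ [-> ->].
rewrite -(card_uniqP op_uniq) (eq_card (mem_offpairs s)) card_offdiag cardsE.
by rewrite (card_uniqP s_uniq).
Qed.

End Pairs.

Lemma map_uniq_inj_in (T U : eqType) (f : T -> U) (s : seq T) :
  uniq (map f s) -> {in s &, injective f}.
Proof.
elim: s => //= x s IHs /andP[fxs fs_uniq] y z; rewrite !inE.
case/predU1P=> [-> | ys] /predU1P[-> | zs] // fyz.
- by move: fxs; rewrite fyz map_f.
- by move: fxs; rewrite -fyz map_f.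
- exact: IHs.
Qed.

Lemma bigcup_disjoint_card_eq (I T : finType) (A : {set T}) (B : I -> {set T}) :
  (forall i, B i \subset A) -> (forall i j, i != j -> [disjoint B i & B j]) ->
  (\sum_i #|B i| = #|A|)%N -> \bigcup_i B i = A.
Proof.
move=> BA Bdisj cardB; apply/eqP; rewrite eqEcard; apply/andP; split.
  by apply/bigcupsP=> i _; apply: BA.
have := @partition_disjoint_bigcup _ _ _ 0%N addn B (fun _ => 1%N) Bdisj.
by rewrite !sum1_card => ->; under eq_bigr do rewrite sum1_card; rewrite cardB.
Qed.

Section AdditiveOverF2.
Variables (vT wT : vectType 'F_2) (f : vT -> wT).
Hypothesis fD : {morph f : x y / x + y}.

Lemma additive_F2_linear : linear f.
Proof.
have f0 : f 0 = 0 by apply: (addrI (f 0)); rewrite -fD !addr0.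
move=> c u v; have : (c == 0) || (c == 1) by case: c => -[|[|]].
case/orP=> /eqP->.
- by rewrite !scale0r !add0r.
- by rewrite !scale1r fD.
Qed.

Definition F2lfun : 'Hom(vT, wT) :=
  linfun (HB.pack f (GRing.isLinear.Build _ _ _ _ f additive_F2_linear) : {linear vT -> wT}).

Lemma F2lfunE : F2lfun =1 f.
Proof. exact: lfunE. Qed.

Lemma memv_F2lfun_imgP (X : {vspace vT}) w :
  reflect (exists2 u, u \in X & w = f u) (w \in F2lfun @: X)%VS.
Proof.
by apply: (iffP memv_imgP) => -[u uX ->]; exists u; rewrite ?F2lfunE.
Qed.

Lemma dim_F2lfun_img (X : {vspace vT}) : injective f -> \dim (F2lfun @: X) = \dim X.
Proof.
move=> f_inj; apply: limg_dim_eq; apply/eqP; rewrite -subv0.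
apply: subv_trans (capvSr _ _) _; rewrite subv0.
by apply/lker0P => u v; rewrite !F2lfunE => /f_inj.
Qed.

End AdditiveOverF2.

Lemma dim2_subvE (K : fieldType) (vT : vectType K) (U : {vspace vT}) : \dim U = 2%N ->
  exists x y, [/\ x != 0, y != 0, x != y &
    forall V : {vspace vT}, (U <= V)%VS = (x \in V) && (y \in V)].
Proof.
move=> dimU; have sz : size (vbasis U) = 2%N by rewrite size_tuple.
move: (basis_free (vbasisP U)) (span_basis (vbasisP U)) sz.
case: (tval (vbasis U)) => [|x [|y [|]]] //= xy_free xy_span _.
exists x, y; split.
- by apply: (free_not0 xy_free); rewrite inE eqxx.
- by apply: (free_not0 xy_free); rewrite !inE eqxx orbT.
- by have := free_uniq xy_free; rewrite /= inE andbT.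
move=> V; rewrite -xy_span; apply/span_subvP/andP=> [xyV | [xV yV] z].
  by split; apply: xyV; rewrite !inE eqxx ?orbT.
by rewrite !inE => /orP[] /eqP ->.
Qed.

Lemma steiner_structure_of_partition (k n : nat) (T : finType)
    (V : T -> {vspace 'rV['F_2]_n}) :
  (forall t, \dim (V t) = k) ->
  (forall x y, x != 0 -> y != 0 -> x != y ->
     exists t0, forall t, (x \in V t) && (y \in V t) = (t == t0)) ->
  steiner_structure k n (undup [seq V t | t <- enum T]).
Proof.
move=> dimV V_part; split; first exact: undup_uniq.
split=> [W | U dimU]; first by rewrite mem_undup => /mapP[t _ ->].
have [x [y [x_neq0 y_neq0 xy subU]]] := dim2_subvE dimU.
have [t0 Vt0] := V_part x y x_neq0 y_neq0 xy.
rewrite (@eq_in_count _ _ (pred1 (V t0))); last first.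
  move=> W; rewrite mem_undup => /mapP[t _ ->] /=; rewrite subU Vt0.
  by apply/eqP/eqP=> [-> // | eV]; apply/eqP; rewrite -Vt0 eV Vt0.
by rewrite count_uniq_mem ?undup_uniq // mem_undup map_f ?mem_enum.
Qed.

Section CosetDifferences.
Variables (n : nat) (L : finFieldType) (alpha : L).
Variables (phi : 'rV['F_2]_n -> L) (psi : L -> 'rV['F_2]_n).
Hypothesis phiD : {morph phi : x y / x + y}.
Hypothesis phiK : cancel phi psi.
Local Notation N := (NN n).

Lemma phi_eq0 v : (phi v == 0) = (v == 0).
Proof.
have phi0 : phi 0 = 0 by apply: (addrI (phi 0)); rewrite -phiD !addr0.
by rewrite -phi0 (inj_eq (can_inj phiK)).
Qed.

Definition nzvecs (X : {vspace 'rV['F_2]_n}) : {set 'rV['F_2]_n} := [set v in X | v != 0].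

Lemma card_nzvecs X : #|nzvecs X| = (2 ^ \dim X).-1.
Proof.
have := cardsD1 0 [set v in X]; rewrite inE mem0v cardsE card_vspace card_Fp //.
by rewrite add1n => ->; apply: eq_card => v; rewrite !inE andbC.
Qed.

Lemma mem_nzpts X v : (phi v \in nzpts phi X) = (v \in nzvecs X).
Proof.
by rewrite (mem_map (can_inj phiK)) mem_filter mem_enum !inE andbT.
Qed.

Lemma size_nzpts X : size (nzpts phi X) = #|nzvecs X|.
Proof.
rewrite size_map -(card_uniqP (filter_uniq _ (enum_uniq _))).
by apply: eq_card => v; rewrite mem_filter mem_enum !inE andbT.
Qed.

Definition coset_value (p : 'rV['F_2]_n * 'rV['F_2]_n) : nat :=
  rho N n (log_quot n alpha (phi p.1) (phi p.2)).

Lemma mem_offpairs_nzpts X p :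
  ((phi p.1, phi p.2) \in offpairs (nzpts phi X)) = (p \in offdiag (nzvecs X)).
Proof. by rewrite mem_offpairs !inE /= !mem_nzpts !inE (inj_eq (can_inj phiK)). Qed.

Lemma mem_coset_diff X p :
  p \in offdiag (nzvecs X) -> coset_value p \in coset_diff phi alpha X.
Proof.
rewrite -mem_offpairs_nzpts mem_undup.
exact: (map_f (fun q => rho N n (log_quot n alpha q.1 q.2))).
Qed.

Lemma coset_complete_inj k X : coset_complete phi alpha k X ->
  {in offdiag (nzvecs X) &, injective coset_value}.
Proof.
case/andP=> /eqP dimX /eqP size_cd p q pX qX epq.
have cv_uniq : uniq [seq rho N n (log_quot n alpha q.1 q.2) | q <- offpairs (nzpts phi X)].
  apply/negPn; rewrite -ltn_size_undup [size (undup _)]size_cd size_map size_offpairs.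
    by rewrite size_nzpts card_nzvecs dimX -!subn1 -subnDA ltnn.
  by rewrite (map_inj_uniq (can_inj phiK)) filter_uniq ?enum_uniq.
have [] := map_uniq_inj_in cv_uniq (etrans (mem_offpairs_nzpts X p) pX)
  (etrans (mem_offpairs_nzpts X q) qX) epq.
by case: p {pX epq} q {qX} => [u w] [u' w'] /= /(can_inj phiK) -> /(can_inj phiK) ->.
Qed.

End CosetDifferences.

Section TwistedBlocks.
Variables (n k m : nat) (L : finFieldType) (alpha : L).
Variables (phi : 'rV['F_2]_n -> L) (psi : L -> 'rV['F_2]_n).
Hypothesis n_prime : prime n.
Hypothesis cardL : #|L| = (2 ^ n)%N.
Hypothesis alpha_prim : (NN n).-primitive_root alpha.
Hypothesis phiD : {morph phi : x y / x + y}.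
Hypothesis phiK : cancel phi psi.
Hypothesis psiK : cancel psi phi.
Variable F : 'I_m -> {vspace 'rV['F_2]_n}.
Hypothesis F_cc : forall i, coset_complete phi alpha k (F i).
Hypothesis F_disj : forall i j, i != j -> disjoint_coset phi alpha (F i) (F j).
Local Notation N := (NN n).
Local Notation block_index := ('I_m * 'I_N * 'I_n)%type.

Definition block_map (t : block_index) (v : 'rV['F_2]_n) : 'rV['F_2]_n :=
  psi (twist alpha t.1.2 t.2 (phi v)).

Lemma block_mapD t : {morph block_map t : x y / x + y}.
Proof.
move=> x y; apply: (can_inj phiK).
by rewrite /block_map phiD !psiK phiD (twistD _ cardL) !psiK.
Qed.

Lemma block_map_inj t : injective (block_map t).
Proof. by move=> x y /(can_inj psiK) /(twist_inj cardL alpha_prim) /(can_inj phiK). Qed.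

Lemma block_map_eq0 t v : (block_map t v == 0) = (v == 0).
Proof.
by rewrite -(phi_eq0 phiD phiK) psiK (twist_eq0 alpha_prim) (phi_eq0 phiD phiK).
Qed.

Definition block (t : block_index) : {vspace 'rV['F_2]_n} :=
  (F2lfun (block_mapD t) @: F t.1.1)%VS.

Definition block_pairs (t : block_index) : {set 'rV['F_2]_n * 'rV['F_2]_n} :=
  [set (block_map t p.1, block_map t p.2) | p in offdiag (nzvecs (F t.1.1))].

Lemma coset_value_block_map t p : p \in offdiag (nzvecs (F t.1.1)) ->
  coset_value alpha phi (block_map t p.1, block_map t p.2) = coset_value alpha phi p.
Proof.
rewrite !inE -!(phi_eq0 phiD phiK) => /and3P[/andP[_ p1_neq0] /andP[_ p2_neq0] _].
rewrite /coset_value /block_map /= !psiK.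
by rewrite (rho_mulX (prime_gt0 n_prime) (log_quot_twist cardL alpha_prim _ _ _ _)).
Qed.

Lemma block_pairs_uniq t t' p p' :
  p \in offdiag (nzvecs (F t.1.1)) -> p' \in offdiag (nzvecs (F t'.1.1)) ->
  block_map t p.1 = block_map t' p'.1 -> block_map t p.2 = block_map t' p'.2 -> t = t'.
Proof.
case: t t' => [[i j] l] [[i' j'] l'] /= pF p'F e1 e2.
have cv : coset_value alpha phi p = coset_value alpha phi p'.
  by rewrite -(coset_value_block_map (t := (i, j, l))) // e1 e2 coset_value_block_map.
have ii' : i = i'.
  case: (eqVneq i i') => // /F_disj /negP[]; apply/hasP; exists (coset_value alpha phi p).
  - exact: mem_coset_diff pF.
  - by rewrite cv; apply: mem_coset_diff p'F.
subst i'; have pp' := coset_complete_inj phiK (F_cc i) pF p'F cv; subst p'.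
move: pF; rewrite !inE => /and3P[/andP[_ p1_neq0] /andP[_ p2_neq0] p12].
rewrite -(phi_eq0 phiD phiK) in p1_neq0; rewrite -(phi_eq0 phiD phiK) in p2_neq0.
rewrite -(inj_eq (can_inj phiK)) in p12.
have [jj' ll'] := twist_params_uniq cardL alpha_prim n_prime p1_neq0 p2_neq0 p12
  (ltn_ord j) (ltn_ord j') (ltn_ord l) (ltn_ord l') (can_inj psiK e1) (can_inj psiK e2).
by rewrite (val_inj jj') (val_inj ll').
Qed.

Lemma dim_block t : \dim (block t) = k.
Proof.
rewrite dim_F2lfun_img; last exact: block_map_inj.
by case/andP: (F_cc t.1.1) => /eqP.
Qed.

Lemma mem_block t v : reflect (exists2 u, u \in F t.1.1 & v = block_map t u) (v \in block t).
Proof. exact: memv_F2lfun_imgP. Qed.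

Lemma card_block_pairs t : #|block_pairs t| = ((2 ^ k).-1 * (2 ^ k - 2))%N.
Proof.
rewrite card_imset ?card_offdiag ?card_nzvecs; last first.
  by move=> [u w] [u' w'] [/block_map_inj -> /block_map_inj ->].
by case/andP: (F_cc t.1.1) => /eqP -> _; rewrite -!subn1 -subnDA.
Qed.

Lemma block_pairs_sub t : block_pairs t \subset offdiag [set~ 0].
Proof.
apply/subsetP=> _ /imsetP[[u w] + ->].
rewrite !inE /= !block_map_eq0 (inj_eq (@block_map_inj t)).
by case/and3P=> /andP[_ ->] /andP[_ ->].
Qed.

Lemma block_pairs_disjoint t t' : t != t' -> [disjoint block_pairs t & block_pairs t'].
Proof.
apply: contraNT => /pred0Pn[_ /andP[/imsetP[p pF ->] /imsetP[p' p'F [e1 e2]]]].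
by rewrite (block_pairs_uniq pF p'F e1 e2).
Qed.

Lemma block_pairsE t x y : x != 0 -> y != 0 -> x != y ->
  ((x, y) \in block_pairs t) = (x \in block t) && (y \in block t).
Proof.
move=> x_neq0 y_neq0 xy; apply/imsetP/andP.
  case=> [[u w]]; rewrite !inE => /and3P[/andP[uF _] /andP[wF _] _] [-> ->].
  by split; apply/mem_block; [exists u | exists w].
case=> /mem_block[u uF ex] /mem_block[w wF ey].
subst x y; rewrite (inj_eq (@block_map_inj t)) in xy.
rewrite block_map_eq0 in x_neq0; rewrite block_map_eq0 in y_neq0.
by exists (u, w); rewrite // !inE /= uF wF x_neq0 y_neq0.
Qed.

Hypothesis m_count : (m * ((2 ^ k).-1 * (2 ^ k - 2) * n))%N = (2 ^ n - 2)%N.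

Lemma cover_block_pairs : \bigcup_t block_pairs t = offdiag [set~ 0].
Proof.
apply: bigcup_disjoint_card_eq block_pairs_sub block_pairs_disjoint _.
under eq_bigr do rewrite card_block_pairs.
rewrite sum_nat_const !card_prod !card_ord card_offdiag cardsC1 card_mx card_Fp //= mul1n.
rewrite -subn2 -m_count /NN; lia.
Qed.

Lemma block_pairs_partition x y : x != 0 -> y != 0 -> x != y ->
  exists t0, forall t, ((x, y) \in block_pairs t) = (t == t0).
Proof.
move=> x_neq0 y_neq0 xy.
have : (x, y) \in \bigcup_t block_pairs t by rewrite cover_block_pairs !inE x_neq0 y_neq0.
case/bigcupP=> t0 _ xy_t0; exists t0 => t.
case: (eqVneq t t0) => [-> // | /block_pairs_disjoint].
by move/disjointFl; apply.
Qed.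

Lemma steiner_structure_blocks :
  steiner_structure k n (undup [seq block t | t <- enum {: block_index}]).
Proof.
apply: steiner_structure_of_partition => [|x y x_neq0 y_neq0 xy]; first exact: dim_block.
have [t0 xy_t0] := block_pairs_partition x_neq0 y_neq0 xy.
by exists t0 => t; rewrite -block_pairsE.
Qed.

End TwistedBlocks.

Theorem theorem2 (n k : nat) (L : finFieldType) (alpha : L)
    (phi : 'rV['F_2]_n -> L) :
  prime n ->
  #|L| = (2 ^ n)%N ->
  (NN n).-primitive_root alpha ->
  {morph phi : x y / x + y} -> bijective phi ->
  (2 <= k)%N ->
  forall m : nat,
  (m * ((2 ^ k).-1 * (2 ^ k - 2) * n))%N = ((2 ^ n) - 2)%N ->
  (exists F : 'I_m -> {vspace 'rV['F_2]_n},
      (forall i, coset_complete phi alpha k (F i)) /\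
      (forall i j, i != j -> disjoint_coset phi alpha (F i) (F j))) ->
  exists S : seq {vspace 'rV['F_2]_n}, steiner_structure k n S.
Proof.
move=> n_prime cardL alpha_prim phiD [psi phiK psiK] _ m m_count [F [F_cc F_disj]].
by eexists; apply: steiner_structure_blocks F_disj m_count.
Qed.
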